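(* Let $d\ge2$, $\varepsilon\in(0,1)$, $c\in\{1,2,\dots\}\cup\{\infty\}$, and let $W$ be the gap process of the $d$-ball SBBS. Let $\gamma=\min\{t\in\mathbb Z_{\ge0}: W^i_t\ge1\text{ for all }1\le i\le d-1\}$. Then for every $x\in\mathbb Z^{d-1}_{\ge0}$, $\mathbb E[\gamma\mid W_0=x]<\infty$.
   Context: Stochastic box-ball system (SBBS). Fix an error probability $\varepsilon\in[0,1]$ and a capacity $c\in\{1,2,\dots\}\cup\{\infty\}$. A configuration is $\zeta\in\{0,1\}^{\mathbb N}$, $\mathbb N=\{1,2,\dots\}$, with finitely many $1$'s (balls). Given $\zeta$, the stochastic carrier process $\Gamma$ is defined by $\Gamma(0)=0$ and recursively (with fresh independent randomness at each $k$): $\Gamma(k)=\Gamma(k-1)+1$ with probability $1-\varepsilon$ (and $\Gamma(k)=\Gamma(k-1)$ otherwise) if $\zeta(k)=1$ and $\Gamma(k-1)<c$; $\Gamma(k)=\Gamma(k-1)-1$ if $\zeta(k)=0$ and $\Gamma(k-1)\ge1$; $\Gamma(k)=\Gamma(k-1)$ otherwise. The new configuration is $\zeta'(k)=\mathbf 1(\Gamma(k)-\Gamma(k-1)=-1)+\mathbf 1(\Gamma(k)=\Gamma(k-1),\ \zeta(k)=1)$. Iterating independently gives the SBBS trajectory $(\zeta_t)_{t\in\mathbb Z_{\ge0}}$. The number $d$ of balls is conserved; $\zeta^{(1)}_t<\dots<\zeta^{(d)}_t$ denote the ball positions. The gap process is $W_t=(W^1_t,\dots,W^{d-1}_t)$,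 $W^i_t=\zeta^{(i+1)}_t-\zeta^{(i)}_t-1$; it is a time-homogeneous Markov chain on $\mathbb Z^{d-1}_{\ge0}$ whose law depends only on $W_0$. *)

From HB Require Import structures.
From mathcomp Require Import all_boot all_order all_algebra.
From mathcomp Require Import boolp classical_sets reals constructive_ereal ereal sequences.
Set Implicit Arguments. Unset Strict Implicit. Unset Printing Implicit Defensive.
Import Order.TTheory GRing.Theory Num.Theory.

(* A configuration is zeta : nat -> bool; site 0 is unused (N = {1,2,...}). *)
(* Capacity c : option nat, None standing for c = infinity. *)

Definition below_cap (c : option nat) (g : nat) : bool :=
  if c is Some n then (g < n)%N else true.

Definition rank (zeta : nat -> bool) (k : nat) : nat := (\sum_(1 <= j < k) zeta j)%N.

Definition is_config (d : nat) (zeta : nat -> bool) : Prop :=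
  zeta 0 = false /\
  exists N, (forall k, (N < k)%N -> zeta k = false) /\ rank zeta N.+1 = d.

(* Carrier process driven by coins: omega r is the coin attached to the ball of
   rank r (0-indexed); omega r = true means "picked up" (probability 1 - eps). *)
Fixpoint carrier (c : option nat) (zeta : nat -> bool) (omega : nat -> bool)
    (k : nat) : nat :=
  match k with
  | 0 => 0
  | k'.+1 =>
      let g := carrier c zeta omega k' in
      if zeta k'.+1 then
        (if below_cap c g then g + omega (rank zeta k'.+1) else g)
      else g.-1
  end.

Definition sbbs_step (c : option nat) (zeta : nat -> bool) (omega : nat -> bool)
    : nat -> bool :=
  fun k => (k != 0%N) &&
    ((carrier c zeta omega k.-1 == (carrier c zeta omega k).+1)
     || ((carrier c zeta omega k == carrier c zeta omega k.-1) && zeta k)).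

(* trajectory driven by the coin family h s r (time s, ball rank r) *)
Fixpoint traj (c : option nat) (zeta0 : nat -> bool) (h : nat -> nat -> bool)
    (t : nat) : nat -> bool :=
  match t with
  | 0 => zeta0
  | t'.+1 => sbbs_step c (traj c zeta0 h t') (h t')
  end.

(* position of the ball of rank i (0-indexed): zeta^{(i+1)} in the paper *)
Definition pos (zeta : nat -> bool) (i : nat) : nat :=
  xget 0%N [set k | zeta k /\ rank zeta k = i].

(* gap i (0-indexed) = W^{i+1} = zeta^{(i+2)} - zeta^{(i+1)} - 1 *)
Definition gap (zeta : nat -> bool) (i : nat) : nat :=
  (pos zeta i.+1 - pos zeta i - 1)%N.

Definition all_gaps_pos (d : nat) (zeta : nat -> bool) : bool :=
  [forall i : 'I_d.-1, (1 <= gap zeta i)%N].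

Definition coins_of (t d : nat) (h : {ffun 'I_t -> {ffun 'I_d -> bool}})
    : nat -> nat -> bool :=
  fun s r => match insub s, insub r with
             | Some s', Some r' => h s' r'
             | _, _ => false
             end.

Definition coin_weight (R : realType) (eps : R) (t d : nat)
    (h : {ffun 'I_t -> {ffun 'I_d -> bool}}) : R :=
  \prod_(s < t) \prod_(r < d) (if h s r then 1 - eps else eps).

Definition gamma_event (d : nat) (c : option nat) (zeta0 : nat -> bool)
    (h : nat -> nat -> bool) (t : nat) : bool :=
  [forall s : 'I_t, ~~ all_gaps_pos d (traj c zeta0 h s)]
  && all_gaps_pos d (traj c zeta0 h t).

Definition prob_gamma (R : realType) (eps : R) (d : nat) (c : option nat)
    (zeta0 : nat -> bool) (t : nat) : R :=
  \sum_(h : {ffun 'I_t -> {ffun 'I_d -> bool}})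
     (coin_weight eps h * (gamma_event d c zeta0 (coins_of h) t)%:R).

Local Open Scope ereal_scope.
(* E[gamma] = sum_t t P(gamma = t) + (+oo) * P(gamma = +oo)  (with +oo * 0 = 0) *)
Definition expect_gamma (R : realType) (eps : R) (d : nat) (c : option nat)
    (zeta0 : nat -> bool) : \bar R :=
  \sum_(0 <= t <oo) ((t%:R * prob_gamma eps d c zeta0 t)%R)%:E
  + +oo * (1 - \sum_(0 <= t <oo) (prob_gamma eps d c zeta0 t)%:E).

From HB Require Import structures.
From mathcomp Require Import all_boot all_order all_algebra.
From mathcomp Require Import boolp classical_sets reals constructive_ereal ereal sequences.
From mathcomp Require Import zify ring lra.
Import Order.TTheory GRing.Theory Num.Theory.

(* Consider the d-1 step "staircase" coin history in which, at step s, exactly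
   the balls of rank at least d-1-s are picked up.  Started from any d-ball
   configuration it separates all the balls, so from every state all gaps
   become positive within L = d-1 steps with probability at least q > 0, the
   weight of that history.  Hence P(gamma > t + L) <= (1 - q) P(gamma > t): the
   tail of gamma decays geometrically, gamma is almost surely finite and
   E[gamma] = sum_t P(gamma > t) <= L / q. *)

Lemma rank0 z : rank z 0 = 0.
Proof. by rewrite /rank big_geq. Qed.

Lemma rank1 z : rank z 1 = 0.
Proof. by rewrite /rank big_geq. Qed.

Lemma rankS z k : z 0 = false -> rank z k.+1 = rank z k + z k.
Proof.
move=> z0; case: k => [|k]; first by rewrite rank0 rank1 z0.
by rewrite /rank big_nat_recr.
Qed.

Lemma leq_rank z m n : m <= n -> rank z m <= rank z n.
Proof.
move=> mn; rewrite /rank; case: (leqP m 1) => m1; first by rewrite big_geq.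
by rewrite (@big_cat_nat _ _ _ m 1 n) //= ?leq_addr // ltnW.
Qed.

Lemma rank_empty_tail z N j : z 0 = false -> (forall k, N < k -> z k = false) ->
  rank z (N.+1 + j) = rank z N.+1.
Proof.
move=> z0 zN; elim: j => [|j IH]; first by rewrite addn0.
by rewrite addnS rankS // IH zN //; lia.
Qed.

Lemma carrierS c z w k : carrier c z w k.+1 =
  if z k.+1 then
    (if below_cap c (carrier c z w k) then carrier c z w k + w (rank z k.+1)
     else carrier c z w k)
  else (carrier c z w k).-1.
Proof. by []. Qed.

Lemma sbbs_stepS c z w k : sbbs_step c z w k.+1 =
  (carrier c z w k == (carrier c z w k.+1).+1)
  || ((carrier c z w k.+1 == carrier c z w k) && z k.+1).
Proof. by []. Qed.

Lemma carrier_leq c z w k : carrier c z w k <= k.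
Proof.
elim: k => [//|k IH]; rewrite carrierS.
by case: (z k.+1); [case: below_cap; [case: (w _)|]|] => /=; lia.
Qed.

Lemma carrier_empty_tail c z w N j : (forall k, N < k -> z k = false) ->
  carrier c z w (N + j) = carrier c z w N - j.
Proof.
move=> zN; elim: j => [|j IH]; first by rewrite addn0 subn0.
by rewrite addnS carrierS zN ?IH //; lia.
Qed.

Lemma rank_sbbs_step c z w k : z 0 = false ->
  rank (sbbs_step c z w) k.+1 + carrier c z w k = rank z k.+1.
Proof.
move=> z0; elim: k => [|k IH]; first by rewrite !rank1.
rewrite (rankS (sbbs_step c z w)) // (rankS z) // -IH sbbs_stepS carrierS.
case: (z k.+1); [case: below_cap; [case: (w _)|]|];
  case: (carrier c z w k) => [|g] /=; rewrite ?eqxx /=; lia.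
Qed.

Lemma sbbs_step_config c z w d : is_config d z -> is_config d (sbbs_step c z w).
Proof.
move=> [z0 [N [zN rN]]]; split; first by [].
have drained j : N + N <= j -> carrier c z w j = 0.
  move=> Nj; have -> : j = N + (j - N) by lia.
  by rewrite carrier_empty_tail //; have := carrier_leq c z w N; lia.
exists (N + N); split.
  case=> [//|k] Nk; rewrite sbbs_stepS !drained ?zN //; lia.
have := rank_sbbs_step c z w (N + N) z0; rewrite drained // addn0 => ->.
by rewrite -addSn rank_empty_tail.
Qed.

Lemma traj_config c z h d t : is_config d z -> is_config d (traj c z h t).
Proof. by move=> hz; elim: t => [//|t IH] /=; apply: sbbs_step_config. Qed.

Lemma trajD c z h s t :
  traj c z h (s + t) = traj c (traj c z h s) (fun u => h (s + u)) t.
Proof. by elim: t => [|t IH]; rewrite ?addn0 // addnS /= IH. Qed.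

Lemma eq_traj c z h h' t : (forall u, u < t -> h u = h' u) ->
  traj c z h t = traj c z h' t.
Proof.
elim: t => [//|t IH] e /=; rewrite IH ?e // => u ut; apply: e; lia.
Qed.

Lemma ball_rank_inj z k k' : z 0 = false -> z k -> z k' ->
  rank z k = rank z k' -> k = k'.
Proof.
move=> z0 zk zk' e; apply/eqP; rewrite eqn_leq.
apply/andP; split; rewrite leqNgt; apply/negP => lt.
all: have := leq_rank z _ _ lt; rewrite rankS //.
  by rewrite zk' e; lia.
by rewrite zk e; lia.
Qed.

Section Balls.
Variables (d : nat) (z : nat -> bool).
Hypothesis hz : is_config d z.

Lemma rank_config_leq k : rank z k <= d.
Proof.
have [z0 [N [zN rN]]] := hz.
have := @leq_rank z _ _ (leq_maxl k N.+1).
by rewrite -(subnKC (leq_maxr k N.+1)) rank_empty_tail // rN.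
Qed.

Lemma pos_ball i : i < d -> z (pos z i) /\ rank z (pos z i) = i.
Proof.
move=> id; have [z0 [N [zN rN]]] := hz.
have [m ball_m] : exists m, z m /\ rank z m = i.
  have ex : exists n, i < rank z n by exists N.+1; rewrite rN.
  case: (ex_minnP ex) => -[|m]; first by rewrite rank0.
  move=> im minm; exists m.
  have : ~~ (i < rank z m) by apply/negP => /minm; lia.
  by move: im; rewrite rankS //; case: (z m) => /=; lia.
case: ball_m => zm rm; rewrite /pos (@xget_unique _ _ _ m) // => k [zk rk].
by apply: (ball_rank_inj _ _ _ z0 zk zm); rewrite rk rm.
Qed.
End Balls.

Definition spaced_from (z : nat -> bool) (i : nat) : Prop :=
  forall k, z k -> z k.+1 -> rank z k < i.

Definition high_ball (z : nat -> bool) (i k : nat) : bool := z k && (i <= rank z k).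

Lemma spaced_from_config d z : is_config d z -> spaced_from z d.-1.
Proof.
move=> hz k zk zk1; have [z0 _] := hz.
have := rank_config_leq _ _ hz k.+2.
by rewrite (rankS z k.+1) // (rankS z k) // zk zk1 /=; lia.
Qed.

Lemma all_gaps_pos_spaced d z : is_config d z -> spaced_from z 0 -> all_gaps_pos d z.
Proof.
move=> hz hs; have [z0 _] := hz.
apply/forallP => -[i id] /=; rewrite /gap.
have id1 : i.+1 < d by lia.
have [zp rp] := pos_ball _ _ hz i (ltnW id1).
have [zq rq] := pos_ball _ _ hz i.+1 id1.
have lt_pq : pos z i < pos z i.+1.
  by rewrite ltnNge; apply/negP => /(leq_rank z); rewrite rp rq; lia.
have : pos z i.+1 != (pos z i).+1.
  by apply/eqP => e; rewrite e in zq; have := hs _ zp zq.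
lia.
Qed.

Section SpacedStep.
Variables (c : option nat) (z w : nat -> bool) (i : nat).
Hypotheses (z0 : z 0 = false) (cap0 : below_cap c 0) (hs : spaced_from z i).
Hypothesis hw : forall k, z k -> w (rank z k) = (i <= rank z k).

Lemma high_ball_next k : high_ball z i k -> z k.+1 = false.
Proof.
case/andP=> zk ik; apply/negP => zk1.
by have := hs k zk zk1; rewrite ltnNge ik.
Qed.

(* A high ball is picked up and, its right neighbour being empty, put down at
   once; low balls are left in place. *)
Lemma carrier_high_ball k : carrier c z w k = high_ball z i k.
Proof.
elim: k => [|k IH]; first by rewrite /high_ball z0.
rewrite carrierS IH.
case zk1: (z k.+1); last by rewrite {2}/high_ball zk1; case: high_ball.
case hk: (high_ball z i k); first by rewrite high_ball_next in zk1.
by rewrite /= cap0 add0n hw ?zk1 // /high_ball zk1.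
Qed.

Lemma sbbs_step_high k :
  sbbs_step c z w k.+1 = high_ball z i k || (z k.+1 && ~~ high_ball z i k.+1).
Proof.
rewrite sbbs_stepS !carrier_high_ball.
case hk: (high_ball z i k); first by rewrite /high_ball (high_ball_next _ hk).
by case: high_ball; case: (z k.+1).
Qed.

Lemma spaced_from_sbbs_step : 0 < i -> spaced_from (sbbs_step c z w) i.-1.
Proof.
move=> i_gt0 [//|k] sk sk1.
have := rank_sbbs_step c z w k z0; rewrite carrier_high_ball => rk.
have rk1 := rankS z k.+1 z0; have rk0 := rankS z k z0.
move: sk1; rewrite sbbs_step_high => /orP[hk1|/andP[zk2 lk2]].
  move: sk; rewrite sbbs_step_high => /orP[hk|/andP[_ lk1]].
    by move: hk1; rewrite /high_ball (high_ball_next _ hk).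
  by rewrite hk1 in lk1.
have r2 : rank z k.+2 < i by move: lk2; rewrite /high_ball zk2 -ltnNge.
move: sk; rewrite sbbs_step_high => /orP[hk|/andP[zk1 _]].
  case/andP: (hk) => zk ik.
  by move: rk1 rk0; rewrite zk (high_ball_next _ hk); lia.
by move: rk rk1; rewrite zk1; case: high_ball => /=; lia.
Qed.
End SpacedStep.

Lemma coins_ofE t d (h : {ffun 'I_t -> {ffun 'I_d -> bool}}) s r
  (hs : s < t) (hr : r < d) : coins_of h s r = h (Ordinal hs) (Ordinal hr).
Proof.
rewrite /coins_of (insubT (fun x => x < t) hs) (insubT (fun x => x < d) hr) /=.
by congr (h _ _); apply: val_inj.
Qed.
Arguments coins_ofE {t d} h {s r}.

Definition staircase_coins d : {ffun 'I_d.-1 -> {ffun 'I_d -> bool}} :=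
  [ffun s : 'I_d.-1 => [ffun r : 'I_d => d.-1 - s <= r]].

(* At step s exactly the balls of rank at least d-1-s are picked up, so after s
   steps the configuration is spaced from rank d-1-s on. *)
Lemma staircase_all_gaps_pos c d z : below_cap c 0 -> is_config d z ->
  all_gaps_pos d (traj c z (coins_of (staircase_coins d)) d.-1).
Proof.
move=> cap0 hz; set w := coins_of (staircase_coins d).
suff : forall s, s <= d.-1 -> spaced_from (traj c z w s) (d.-1 - s).
  move/(_ d.-1 (leqnn _)); rewrite subnn.
  by apply: all_gaps_pos_spaced; apply: traj_config.
elim=> [|s IH] hs; first by rewrite subn0; apply: spaced_from_config.
have hzs := traj_config c z w d s hz; have [z0 _] := hzs.
rewrite /= (_ : d.-1 - s.+1 = (d.-1 - s).-1); last by lia.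
apply: spaced_from_sbbs_step => //; last by rewrite subn_gt0.
  by apply: IH; lia.
move=> k zk; have rk : rank (traj c z w s) k < d.
  by have := rank_config_leq _ _ hzs k.+1; rewrite rankS // zk; lia.
by rewrite /w (coins_ofE _ hs rk) !ffunE.
Qed.

Definition coins_cat (n : nat) (w1 w2 : nat -> nat -> bool) : nat -> nat -> bool :=
  fun s => if s < n then w1 s else w2 (s - n).

Definition ffun_cat (X : Type) n m (h1 : {ffun 'I_n -> X}) (h2 : {ffun 'I_m -> X}) :
    {ffun 'I_(n + m) -> X} :=
  [ffun i => match split i with inl j => h1 j | inr j => h2 j end].
Arguments ffun_cat {X n m}.

Lemma coins_of_out t d (h : {ffun 'I_t -> {ffun 'I_d -> bool}}) s r :
  ~~ ((s < t) && (r < d)) -> coins_of h s r = false.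
Proof.
rewrite negb_and /coins_of => /orP[hs|hr]; first by rewrite insubF //; apply/negbTE.
by case: insub => // ?; rewrite insubF //; apply/negbTE.
Qed.

Lemma coins_of_cat d n m (h1 : {ffun 'I_n -> {ffun 'I_d -> bool}})
    (h2 : {ffun 'I_m -> {ffun 'I_d -> bool}}) :
  coins_of (ffun_cat h1 h2) = coins_cat n (coins_of h1) (coins_of h2).
Proof.
apply/funext => s; apply/funext => r; rewrite /coins_cat.
case hr: (r < d); last first.
  by rewrite coins_of_out ?hr ?andbF //; case: ifP; rewrite coins_of_out ?hr ?andbF.
case hs: (s < n + m); last first.
  by rewrite coins_of_out ?hs //; case: ifP => sn; rewrite coins_of_out //; lia.
rewrite (coins_ofE _ hs hr) ffunE; case: splitP => j /= ej.
  have sn : s < n by rewrite ej.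
  by rewrite sn (coins_ofE _ sn hr); congr (h1 _ _); apply: val_inj.
have sm : s - n < m by lia.
rewrite ifN ?(coins_ofE _ sm hr); last by rewrite ej; lia.
by congr (h2 _ _); apply: val_inj => /=; lia.
Qed.

Local Open Scope ring_scope.

Lemma big_ffun_cat (R : nmodType) (X : finType) n m (F : {ffun 'I_(n + m) -> X} -> R) :
  \sum_h F h =
  \sum_(h1 : {ffun 'I_n -> X}) \sum_(h2 : {ffun 'I_m -> X}) F (ffun_cat h1 h2).
Proof.
rewrite pair_big /= (reindex (fun p => ffun_cat p.1 p.2)) //.
exists (fun h : {ffun 'I_(n + m) -> X} =>
  ([ffun j => h (lshift m j)] : {ffun 'I_n -> X},
   [ffun j => h (rshift n j)] : {ffun 'I_m -> X})).
  move=> [h1 h2] _; congr pair; apply/ffunP => j; rewrite !ffunE.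
    case: splitP => k /= ek; first by congr (h1 _); apply: val_inj.
    by have := ltn_ord j; rewrite ek; lia.
  case: splitP => k /= ek; first by have := ltn_ord k; rewrite -ek; lia.
  by congr (h2 _); apply: val_inj => /=; lia.
move=> h _; apply/ffunP => i; rewrite !ffunE.
by case: splitP => k ek; rewrite ffunE; congr (h _); apply: val_inj.
Qed.

Set Implicit Arguments. Unset Strict Implicit.

Section CoinExpectation.
Variables (R : realType) (eps : R) (d : nat).
Hypotheses (eps_ge0 : 0 <= eps) (eps_le1 : eps <= 1).

Definition coin_expect n (G : (nat -> nat -> bool) -> R) : R :=
  \sum_(h : {ffun 'I_n -> {ffun 'I_d -> bool}}) coin_weight eps h * G (coins_of h).

Let coin_prob_ge0 (b : bool) : 0 <= (if b then 1 - eps else eps).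
Proof. by case: b; rewrite ?subr_ge0. Qed.

Lemma coin_weight_ge0 n (h : {ffun 'I_n -> {ffun 'I_d -> bool}}) : 0 <= coin_weight eps h.
Proof. by apply: prodr_ge0 => s _; apply: prodr_ge0. Qed.

Lemma coin_weight_le1 n (h : {ffun 'I_n -> {ffun 'I_d -> bool}}) : coin_weight eps h <= 1.
Proof.
apply: prodr_ile1 => s _; rewrite prodr_ge0 //= prodr_ile1 // => r _.
by rewrite coin_prob_ge0; case: (h s r); rewrite /= ?gerDl ?oppr_le0.
Qed.

Lemma coin_weight_gt0 n (h : {ffun 'I_n -> {ffun 'I_d -> bool}}) :
  0 < eps -> eps < 1 -> 0 < coin_weight eps h.
Proof.
move=> eps_gt0 eps_lt1; apply: prodr_gt0 => s _; apply: prodr_gt0 => r _.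
by case: (h s r); rewrite ?subr_gt0.
Qed.

Lemma coin_weight_cat n m (h1 : {ffun 'I_n -> {ffun 'I_d -> bool}})
    (h2 : {ffun 'I_m -> {ffun 'I_d -> bool}}) :
  coin_weight eps (ffun_cat h1 h2) = coin_weight eps h1 * coin_weight eps h2.
Proof.
rewrite /coin_weight big_split_ord /=; congr (_ * _).
all: apply: eq_bigr => i _; rewrite ffunE.
  case: splitP => j /= ej; last by have := ltn_ord i; rewrite ej; lia.
  by have -> : j = i by apply: val_inj.
case: splitP => j /= ej; first by have := ltn_ord j; rewrite -ej; lia.
by have -> : j = i by apply: val_inj => /=; lia.
Qed.

Lemma coin_expect_cat n m G : coin_expect (n + m) G =
  coin_expect n (fun w1 => coin_expect m (fun w2 => G (coins_cat n w1 w2))).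
Proof.
rewrite /coin_expect big_ffun_cat; apply: eq_bigr => h1 _; rewrite mulr_sumr.
by apply: eq_bigr => h2 _; rewrite coin_weight_cat coins_of_cat mulrA.
Qed.

Lemma eq_coin_expect n G G' :
  (forall w, G w = G' w) -> coin_expect n G = coin_expect n G'.
Proof. by move=> e; apply: eq_bigr => h _; rewrite e. Qed.

Lemma coin_expectZ n a G : coin_expect n (fun w => a * G w) = a * coin_expect n G.
Proof. by rewrite /coin_expect mulr_sumr; apply: eq_bigr => h _; rewrite mulrCA. Qed.

Lemma coin_expectD n G G' :
  coin_expect n (fun w => G w + G' w) = coin_expect n G + coin_expect n G'.
Proof. by rewrite /coin_expect -big_split; apply: eq_bigr => h _; rewrite mulrDr. Qed.

Lemma coin_expect1 n : coin_expect n (fun _ => 1) = 1.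
Proof.
rewrite /coin_expect; under eq_bigr do rewrite mulr1.
rewrite /coin_weight -(bigA_distr_bigA (fun (s : 'I_n) (x : {ffun 'I_d -> bool}) =>
   \prod_(r < d) (if x r then 1 - eps else eps))).
apply: big1 => s _.
rewrite -(bigA_distr_bigA (fun (r : 'I_d) (b : bool) => if b then 1 - eps else eps)).
by apply: big1 => r _; rewrite big_bool /=; lra.
Qed.

Lemma coin_expect_cst n a : coin_expect n (fun _ => a) = a.
Proof.
rewrite -[RHS]mulr1 -(coin_expect1 n) -coin_expectZ.
by apply: eq_coin_expect => w; rewrite mulr1.
Qed.

Lemma coin_expect_prefix n m G : (forall w1 w2, G (coins_cat n w1 w2) = G w1) ->
  coin_expect (n + m) G = coin_expect n G.
Proof.
move=> G_prefix; rewrite coin_expect_cat; apply: eq_coin_expect => w1.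
by rewrite (@eq_coin_expect m _ (fun _ => G w1)) ?coin_expect_cst.
Qed.

Lemma coin_expect_ge0 n G : (forall w, 0 <= G w) -> 0 <= coin_expect n G.
Proof. by move=> G_ge0; apply: sumr_ge0 => h _; rewrite mulr_ge0 ?coin_weight_ge0. Qed.

Lemma ler_coin_expect n G G' : (forall w, G w <= G' w) ->
  coin_expect n G <= coin_expect n G'.
Proof. by move=> GG'; apply: ler_sum => h _; rewrite ler_wpM2l ?coin_weight_ge0. Qed.

Lemma coin_weight_le_expect n G (h0 : {ffun 'I_n -> {ffun 'I_d -> bool}}) :
  (forall w, 0 <= G w) -> coin_weight eps h0 * G (coins_of h0) <= coin_expect n G.
Proof.
move=> G_ge0; rewrite /coin_expect (bigD1 h0) //= lerDl.
by apply: sumr_ge0 => h _; rewrite mulr_ge0 ?coin_weight_ge0.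
Qed.
End CoinExpectation.

Lemma nneseries_le_bound (R : realType) (u : nat -> R) (B : R) :
  (forall n, 0 <= u n) -> (forall n, \sum_(0 <= t < n) u t <= B) ->
  (\sum_(0 <= t <oo) (u t)%:E <= B%:E)%E.
Proof.
move=> u_ge0 uB; apply: ereal_normedtype.lime_le.
  by apply: is_cvg_nneseries => n _ _; rewrite lee_fin.
by apply: nearW => n; rewrite sumEFin lee_fin.
Qed.

Section GeometricTail.
Variables (R : realType) (p tail : nat -> R) (q : R) (L : nat).
Hypotheses (p_ge0 : forall t, 0 <= p t) (tail_ge0 : forall t, 0 <= tail t).
Hypotheses (p_tail0 : p 0 + tail 0 = 1) (p_tailS : forall t, p t.+1 + tail t.+1 = tail t).
Hypotheses (q_gt0 : 0 < q) (q_le1 : q <= 1) (L_gt0 : (0 < L)%N).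
Hypothesis tail_contract : forall t, tail (t + L) <= (1 - q) * tail t.

Lemma tail_nonincr s t : (s <= t)%N -> tail t <= tail s.
Proof.
move=> st; rewrite -(subnKC st); elim: (t - s)%N => [|k IH]; first by rewrite addn0.
by apply: le_trans IH; rewrite addnS -(p_tailS (s + k)) lerDr.
Qed.

Lemma tail_geometric k : tail (k * L) <= (1 - q) ^+ k.
Proof.
elim: k => [|k IH]; first by rewrite mul0n expr0 -p_tail0 lerDr.
rewrite mulSnr exprS; apply: le_trans (tail_contract _) _.
by rewrite ler_wpM2l // subr_ge0.
Qed.

Lemma q_sum_tail_block n : q * \sum_(0 <= s < n * L) tail s <= L%:R * (1 - (1 - q) ^+ n).
Proof.
elim: n => [|n IH]; first by rewrite mul0n big_geq // expr0 subrr !mulr0.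
rewrite mulSnr (@big_cat_nat _ _ _ (n * L)) //= ?leq_addr // mulrDr.
have block : \sum_(n * L <= s < n * L + L) tail s <= L%:R * (1 - q) ^+ n.
  apply: le_trans (_ : \sum_(n * L <= s < n * L + L) tail (n * L)%N <= _).
    by apply: ler_sum_nat => s /andP[ns _]; apply: tail_nonincr.
  rewrite sumr_const_nat addKn -[X in X <= _]mulr_natl.
  by apply: ler_wpM2l; [exact: ler0n | exact: tail_geometric].
have qblock := ler_wpM2l (ltW q_gt0) block.
move: IH qblock; rewrite exprS; set X := (1 - q) ^+ n; nra.
Qed.

Lemma q_sum_tail_le n : q * \sum_(0 <= s < n) tail s <= L%:R.
Proof.
have n_le : (n <= n * L)%N by rewrite leq_pmulr.
apply: le_trans (_ : q * \sum_(0 <= s < n * L) tail s <= _).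
  rewrite ler_pM2l // (@big_cat_nat _ _ _ n 0 (n * L)) //= lerDl.
  by apply: sumr_ge0 => s _.
apply: le_trans (q_sum_tail_block n) _.
have : 0 <= (1 - q) ^+ n by rewrite exprn_ge0 // subr_ge0.
have : 0 <= L%:R :> R by apply: ler0n.
nra.
Qed.

Lemma sum_p_tail n : \sum_(0 <= t < n.+1) p t + tail n = 1.
Proof.
elim: n => [|n IH]; first by rewrite big_nat1.
by rewrite big_nat_recr //= -addrA p_tailS.
Qed.

Lemma sum_tp_tail n :
  \sum_(0 <= t < n.+1) t%:R * p t + n%:R * tail n = \sum_(0 <= s < n) tail s.
Proof.
elim: n => [|n IH]; first by rewrite big_nat1 big_geq // !mul0r addr0.
rewrite big_nat_recr //= [in RHS]big_nat_recr //= -IH -natr1 -(p_tailS n); ring.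
Qed.

Lemma q_sum_tp_le n : q * \sum_(0 <= t < n) t%:R * p t <= L%:R.
Proof.
case: n => [|n]; first by rewrite big_geq // mulr0 ler0n.
apply: le_trans (q_sum_tail_le n); rewrite ler_pM2l //.
by rewrite -sum_tp_tail lerDl mulr_ge0 ?ler0n.
Qed.

Lemma tail_small e : 0 < e -> exists n, tail n <= e.
Proof.
move=> e_gt0; have qe_gt0 : 0 < q * e by rewrite mulr_gt0.
have bound_ge0 : 0 <= L%:R / (q * e) by rewrite divr_ge0 ?ler0n ?ltW.
have := archi_boundP bound_ge0; set N := Num.Def.archi_bound _ => hN.
exists N; have qN_gt0 : 0 < q * N.+1%:R by rewrite mulr_gt0 // ltr0n.
have le_L : q * N.+1%:R * tail N <= L%:R.
  apply: le_trans (q_sum_tail_le N.+1); rewrite -mulrA ler_pM2l //.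
  apply: le_trans (_ : \sum_(0 <= s < N.+1) tail N <= _).
    by rewrite sumr_const_nat subn0 mulr_natl.
  by apply: ler_sum_nat => s /andP[_ sN]; apply: tail_nonincr.
have lt_L : L%:R < q * N.+1%:R * e.
  rewrite ltr_pdivrMr // in hN; apply: lt_le_trans hN _.
  rewrite [leRHS]mulrAC [leRHS]mulrC.
  by apply: ler_wpM2r; [exact: ltW | rewrite ler_nat].
by rewrite -(ler_pM2l qN_gt0); apply: le_trans le_L (ltW lt_L).
Qed.

Lemma geometric_tail_series : (\sum_(0 <= t <oo) (p t)%:E = 1)%E /\
  (\sum_(0 <= t <oo) (t%:R * p t)%:E <= (L%:R / q)%:E)%E.
Proof.
split; last first.
  apply: nneseries_le_bound => [n|n]; first by rewrite mulr_ge0 ?ler0n.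
  by rewrite ler_pdivlMr // mulrC q_sum_tp_le.
apply/eqP; rewrite eq_le; apply/andP; split.
  apply: nneseries_le_bound => // -[|n]; first by rewrite big_geq.
  by rewrite -(sum_p_tail n) lerDl.
apply/lee_addgt0Pr => e e_gt0; have [n hn] := tail_small e_gt0.
apply: le_trans (_ : (\sum_(0 <= t < n.+1) (p t)%:E + e%:E <= _)%E).
  by rewrite sumEFin -EFinD lee_fin -(sum_p_tail n) lerD2l.
by rewrite leeD2r //; apply: nneseries_lim_ge => k _ _; rewrite lee_fin.
Qed.
End GeometricTail.

Section Survival.
Variables (R : realType) (eps : R) (d : nat) (c : option nat) (z0 : nat -> bool).
Hypotheses (eps_ge0 : 0 <= eps) (eps_le1 : eps <= 1).

(* [survives t w]: gamma > t under the coin history [w]. *)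
Definition survives t (w : nat -> nat -> bool) : bool :=
  all (fun s => ~~ all_gaps_pos d (traj c z0 w s)) (iota 0 t.+1).

Definition survival t := coin_expect eps d t (fun w => (survives t w)%:R).

Lemma survivesS t w :
  survives t.+1 w = survives t w && ~~ all_gaps_pos d (traj c z0 w t.+1).
Proof. by rewrite /survives -addn1 iotaD all_cat /= andbT. Qed.

Lemma gamma_event0 w : gamma_event d c z0 w 0 = all_gaps_pos d (traj c z0 w 0).
Proof. by rewrite /gamma_event; case: forallP => // -[] -[]. Qed.

Lemma gamma_eventS t w :
  gamma_event d c z0 w t.+1 = survives t w && all_gaps_pos d (traj c z0 w t.+1).
Proof.
rewrite /gamma_event; congr andb; apply/forallP/allP => H s.
  by rewrite mem_iota => /andP[_ st]; apply: (H (Ordinal st)).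
by apply: H; rewrite mem_iota /=.
Qed.

Lemma survives_coins_cat t w1 w2 : survives t (coins_cat t w1 w2) = survives t w1.
Proof.
apply: eq_in_all => s; rewrite mem_iota add0n => /andP[_ st].
by rewrite (@eq_traj c z0 _ w1) // => u us; rewrite /coins_cat ifT //; lia.
Qed.

Lemma prob_gammaE t :
  prob_gamma eps d c z0 t = coin_expect eps d t (fun w => (gamma_event d c z0 w t)%:R).
Proof. by []. Qed.

Lemma prob_gamma_ge0 t : 0 <= prob_gamma eps d c z0 t.
Proof. by rewrite prob_gammaE; apply: coin_expect_ge0 => // w; apply: ler0n. Qed.

Lemma survival_ge0 t : 0 <= survival t.
Proof. by apply: coin_expect_ge0 => // w; apply: ler0n. Qed.

Lemma prob_gamma_survival0 : prob_gamma eps d c z0 0 + survival 0 = 1.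
Proof.
rewrite prob_gammaE -coin_expectD -[RHS](coin_expect1 eps d 0).
apply: eq_coin_expect => w.
by rewrite /survives gamma_event0 /= andbT; case: all_gaps_pos; rewrite ?addr0 ?add0r.
Qed.

Lemma prob_gamma_survivalS t : prob_gamma eps d c z0 t.+1 + survival t.+1 = survival t.
Proof.
rewrite prob_gammaE /survival -coin_expectD.
rewrite -[in RHS](coin_expect_prefix d eps_ge0 eps_le1 1 (G := fun w => (survives t w)%:R)).
  rewrite addn1; apply: eq_coin_expect => w; rewrite gamma_eventS survivesS.
  by case: survives; case: all_gaps_pos; rewrite ?addr0 ?add0r.
by move=> w1 w2; rewrite survives_coins_cat.
Qed.

Lemma survives_cat t m w1 w2 : survives (t + m) (coins_cat t w1 w2) ->
  survives t w1 && ~~ all_gaps_pos d (traj c (traj c z0 w1 t) w2 m).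
Proof.
move=> /allP surv; rewrite -(survives_coins_cat t w1 w2); apply/andP; split.
  by apply/allP => s; rewrite !mem_iota /= => st; apply: surv; rewrite mem_iota; lia.
have := surv (t + m); rewrite mem_iota /= ltnS leqnn => /(_ isT).
rewrite trajD (@eq_traj c z0 _ w1 t) => [|u ut]; last by rewrite /coins_cat ut.
by rewrite (@eq_traj c _ _ w2 m) // => u _; rewrite /coins_cat ifN ?addKn //; lia.
Qed.

Hypothesis cap0 : below_cap c 0.

Lemma expect_not_all_gaps_pos z : is_config d z ->
  coin_expect eps d d.-1 (fun w => (~~ all_gaps_pos d (traj c z w d.-1))%:R)
  <= 1 - coin_weight eps (staircase_coins d).
Proof.
move=> hzc; rewrite lerBrDr.
have := coin_weight_le_expect eps_ge0 eps_le1
  (G := fun w => (all_gaps_pos d (traj c z w d.-1))%:R) (staircase_coins d).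
rewrite staircase_all_gaps_pos // mulr1 => /(_ (fun w => ler0n _ _)) hq.
apply: le_trans (lerD (lexx _) hq) _.
rewrite -coin_expectD (@eq_coin_expect _ _ _ _ _ (fun _ => 1)) ?coin_expect1 // => w.
by case: all_gaps_pos; rewrite ?addr0 ?add0r.
Qed.

Hypothesis hz : is_config d z0.

Lemma survival_contract t :
  survival (t + d.-1) <= (1 - coin_weight eps (staircase_coins d)) * survival t.
Proof.
rewrite /survival coin_expect_cat // -coin_expectZ; apply: ler_coin_expect => // w1.
apply: le_trans (_ : coin_expect eps d d.-1 (fun w2 => (survives t w1)%:R *
   (~~ all_gaps_pos d (traj c (traj c z0 w1 t) w2 d.-1))%:R) <= _).
  apply: ler_coin_expect => // w2.
  case S: survives; last by rewrite mulr_ge0 ?ler0n.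
  by have /andP[-> ->] := survives_cat S; rewrite mulr1.
rewrite coin_expectZ mulrC ler_wpM2r ?ler0n //.
by apply: expect_not_all_gaps_pos; apply: traj_config.
Qed.
End Survival.

Theorem lemma5p1 (R : realType) (d : nat) (hd : (2 <= d)%N)
  (eps : R) (heps : (0 < eps)%R /\ (eps < 1)%R)
  (c : option nat) (hc : forall n, c = Some n -> (1 <= n)%N)
  (x : 'I_d.-1 -> nat) (zeta0 : nat -> bool)
  (hz : is_config d zeta0) (hx : forall i : 'I_d.-1, gap zeta0 i = x i) :
  (expect_gamma eps d c zeta0 < +oo)%E.
Proof.
have [eps_gt0 eps_lt1] := heps; have [eps_ge0 eps_le1] := (ltW eps_gt0, ltW eps_lt1).
have cap0 : below_cap c 0 by case: c hc => [n /(_ n erefl)|].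
have L_gt0 : (0 < d.-1)%N by rewrite -ltnS (ltn_predK hd).
have [sum_p sum_tp] := geometric_tail_series
  (prob_gamma_ge0 d c zeta0 eps_ge0 eps_le1) (survival_ge0 d c zeta0 eps_ge0 eps_le1)
  (prob_gamma_survival0 eps d c zeta0) (prob_gamma_survivalS d c zeta0 eps_ge0 eps_le1)
  (coin_weight_gt0 (staircase_coins d) eps_gt0 eps_lt1)
  (coin_weight_le1 eps_ge0 eps_le1 (staircase_coins d))
  L_gt0 (survival_contract eps_ge0 eps_le1 cap0 hz).
rewrite /expect_gamma sum_p subee // mule0 adde0.
exact: le_lt_trans sum_tp (ltry _).
Qed.
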